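(* For every $n\in\mathbb{N}$, $\mathcal{SG}(\mathcal{P}_n)=\mathcal{SG}(\mathcal{O}_n)$, where $\mathcal{P}_n$ denotes Grim played on the path with $n$ vertices and $\mathcal{O}_n$ denotes the octal game Octal $.6$ played on a single heap of $n$ chips. That is, the Sprague–Grundy sequence of Grim on paths coincides with the Sprague–Grundy sequence of Octal $.6$.
   Context: Grim is a two-player game on a finite simple undirected graph: any isolated vertices are deleted before play begins (so $\mathcal{P}_1$ has no moves); a move consists of selecting a vertex of the current graph and deleting it together with its incident edges, after which every vertex that has become isolated is also deleted; the last player to move wins. Octal $.6$ is played on a collection of heaps of chips: a move consists of choosing a heap, removing exactly one chip from it, and leaving the remaining chips of that heap as exactly one or exactly two non-empty heaps (so a heap of size $1$ admits no move); the last player to move wins. For a position $X$ of an impartial game, with $\mathcal{F}(X)$ its set of positions reachable in one move, the Sprague–Grundy value is defined recursively by $\mathcal{SG}(X)=\mathrm{mex}\{\mathcal{SG}(Y):Y\in\mathcal{F}(X)\}$, where $\mathrm{mex}$ of a set of non-negative integers is the least non-negative integer not in the set. *)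

From mathcomp Require Import all_boot.
Set Implicit Arguments. Unset Strict Implicit. Unset Printing Implicit Defensive.

(* mex of a finite set of naturals (given as a list): least n not in s.
   Some k <= size s is missing, so searching 0..size s suffices;
   [find] returns the index, which equals the value in iota 0 _. *)
Definition mex (s : seq nat) : nat :=
  find (fun k => k \notin s) (iota 0 (size s).+1).

(* A finite simple graph is a symmetric irreflexive relation [e] on a finType
   [T]; a position of Grim is the set [S] of remaining vertices (the current
   graph is the subgraph induced by [S]). *)
Section Grim.
Variables (T : finType) (e : rel T).

Definition grim_clean (S : {set T}) : {set T} :=
  [set v in S | [exists u in S, e v u]].

Definition grim_move (S : {set T}) (v : T) : {set T} := grim_clean (S :\ v).

(* Sprague-Grundy value with fuel (each move strictly decreases #|S|,
   so fuel #|S| is enough). *)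
Fixpoint grim_sg_fuel (k : nat) (S : {set T}) : nat :=
  match k with
  | 0 => 0
  | k'.+1 => mex [seq grim_sg_fuel k' (grim_move S v) | v <- enum S]
  end.

Definition grim_sg (S : {set T}) : nat := grim_sg_fuel #|S| S.

(* Grim on the whole graph: isolated vertices are deleted before play. *)
Definition grim_graph_sg : nat := grim_sg (grim_clean [set: T]).
End Grim.

Definition path_rel (n : nat) : rel 'I_n :=
  fun i j => (i.+1 == j :> nat) || (j.+1 == i :> nat).

Arguments path_rel n : clear implicits.

(* From a heap of size h one removes one
   chip and leaves either one non-empty heap (of size h-1) or two non-empty
   heaps (a, h-1-a) with 1 <= a <= h-2; a heap of size <= 1 has no move. *)
Definition heap_options (h : nat) : seq (seq nat) :=
  if 2 <= h then [:: h.-1] :: [seq [:: a; h.-1 - a] | a <- iota 1 (h - 2)]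
  else [::].

Definition octal_moves (s : seq nat) : seq (seq nat) :=
  [seq take i s ++ o ++ drop i.+1 s
     | i <- iota 0 (size s), o <- heap_options (nth 0 s i)].

(* each move decreases the total number of chips by one *)
Fixpoint octal_sg_fuel (k : nat) (s : seq nat) : nat :=
  match k with
  | 0 => 0
  | k'.+1 => mex [seq octal_sg_fuel k' t | t <- octal_moves s]
  end.

Definition octal_sg (s : seq nat) : nat := octal_sg_fuel (sumn s) s.

(* Once isolated vertices are removed, a Grim position on a path is a disjoint union
   of subpaths with at least two vertices each.  Deleting the vertex in position j of
   such a subpath of h vertices leaves subpaths of j and h-1-j vertices, and the ones
   of a single vertex vanish: this is exactly the Octal .6 move that takes one chip
   from a heap of h chips and splits the rest into heaps of j and h-1-j.  Heaps of at
   most one chip have no move, so a Grim position and an Octal position have the same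
   Sprague-Grundy value as soon as the run lengths of the former are, as a multiset,
   the heaps of size at least two of the latter; this relation is preserved move by
   move in both directions. *)

From mathcomp Require Import all_boot zify.
Set Implicit Arguments. Unset Strict Implicit.

Lemma has_notin_iota (s : seq nat) : has (fun k => k \notin s) (iota 0 (size s).+1).
Proof.
apply/hasPn => all_in.
have : size (iota 0 (size s).+1) <= size s.
  by apply: uniq_leq_size (iota_uniq _ _) _ => k /all_in; rewrite negbK.
by rewrite size_iota ltnn.
Qed.

Lemma mex_lt_size s : mex s < (size s).+1.
Proof. by rewrite -[X in _ < X](size_iota 0) -has_find; exact: has_notin_iota. Qed.

Lemma mex_notin s : mex s \notin s.
Proof.
have := nth_find 0 (has_notin_iota s).
by rewrite nth_iota ?add0n; last exact: mex_lt_size.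
Qed.

Lemma mem_lt_mex s k : k < mex s -> k \in s.
Proof.
move=> lt_k; have := before_find 0 lt_k.
rewrite nth_iota ?add0n; first by move/negbFE.
apply: (ltn_trans lt_k); exact: mex_lt_size.
Qed.

Lemma eq_mex s1 s2 : s1 =i s2 -> mex s1 = mex s2.
Proof.
move=> eq_s; have notin1 := mex_notin s1; have notin2 := mex_notin s2.
case: (ltngtP (mex s1) (mex s2)) => // lt_mex.
  by move: (mem_lt_mex lt_mex); rewrite -eq_s (negbTE notin1).
by move: (mem_lt_mex lt_mex); rewrite eq_s (negbTE notin2).
Qed.

Section GrundyByFuel.
Variables (X : eqType) (options : X -> seq X) (rank : X -> nat).
Hypothesis rank_options : forall x y, y \in options x -> rank y < rank x.

Fixpoint sg_fuel (k : nat) (x : X) : nat :=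
  if k is k'.+1 then mex [seq sg_fuel k' y | y <- options x] else 0.

Lemma options_rank0 x : rank x = 0 -> options x = [::].
Proof.
case E: (options x) => [|y ys] // rank0.
by have := @rank_options x y; rewrite E inE eqxx rank0 => /(_ isT).
Qed.

Lemma sg_fuel_stable k1 k2 x :
  rank x <= k1 -> rank x <= k2 -> sg_fuel k1 x = sg_fuel k2 x.
Proof.
elim: k1 k2 x => [|k1 IH] [|k2] x //=.
- by rewrite leqn0 => /eqP/options_rank0->.
- by move=> _; rewrite leqn0 => /eqP/options_rank0->.
move=> le_k1 le_k2; congr mex; apply/eq_in_map => y /rank_options lt_y.
by apply: IH; rewrite -ltnS; apply: leq_trans lt_y _.
Qed.

Lemma sg_fuel_rank x :
  sg_fuel (rank x) x = mex [seq sg_fuel (rank y) y | y <- options x].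
Proof.
rewrite (@sg_fuel_stable _ (rank x).+1) //=; congr mex.
by apply/eq_in_map => y /rank_options lt_y; apply: sg_fuel_stable => //; apply: ltnW.
Qed.

End GrundyByFuel.

Section GrimRecursion.
Variables (T : finType) (e : rel T).

Definition grim_options (S : {set T}) : seq {set T} :=
  [seq grim_move e S v | v <- enum S].

Lemma card_grim_move (S : {set T}) v : v \in S -> #|grim_move e S v| < #|S|.
Proof.
move=> Sv; rewrite (cardsD1 v S) Sv add1n ltnS subset_leq_card //.
by apply/subsetP => w; rewrite inE => /andP [].
Qed.

Lemma card_grim_options (S S' : {set T}) : S' \in grim_options S -> #|S'| < #|S|.
Proof. by case/mapP => v; rewrite mem_enum => Sv ->; apply: card_grim_move. Qed.

Lemma grim_sg_fuelE k S : grim_sg_fuel e k S = sg_fuel grim_options k S.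
Proof. by elim: k S => //= k IH S; rewrite -map_comp; congr mex; apply: eq_map. Qed.

Lemma grim_sgE S : grim_sg e S = mex [seq grim_sg e (grim_move e S v) | v <- enum S].
Proof.
rewrite /grim_sg grim_sg_fuelE (sg_fuel_rank card_grim_options) -map_comp.
by congr mex; apply: eq_map => v /=; rewrite grim_sg_fuelE.
Qed.

End GrimRecursion.

Definition large_heaps (s : seq nat) : seq nat := [seq x <- s | 1 < x].

Lemma heap_options_sumn h o : o \in heap_options h -> (sumn o).+1 = h.
Proof.
rewrite /heap_options; case: ifP => // two_le; rewrite inE => /orP [/eqP -> /=|].
  lia.
by case/mapP => a; rewrite mem_iota => /andP [a_ge1 a_lt] -> /=; lia.
Qed.

Lemma large_heap_options h o : o \in heap_options h ->
  1 < h /\ exists2 j, j < h & large_heaps o = large_heaps [:: j; h.-1 - j].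
Proof.
rewrite /heap_options; case: ifP => // two_le; rewrite inE => /orP [/eqP ->|].
  by split => //; exists 0; rewrite ?subn0 // ltnW.
case/mapP => a; rewrite mem_iota => range_a ->; split => //.
by exists a; first lia.
Qed.

Lemma heap_options_split h j : 1 < h -> j < h ->
  exists2 o, o \in heap_options h & large_heaps o = large_heaps [:: j; h.-1 - j].
Proof.
rewrite /heap_options => two_le lt_j; rewrite two_le.
have [->|j_gt0] := posnP j; first by exists [:: h.-1]; rewrite ?inE ?eqxx ?subn0.
have [->|ne_j] := eqVneq j h.-1.
  by exists [:: h.-1]; rewrite ?inE ?eqxx // subnn /large_heaps /=; case: ifP.
exists [:: j; h.-1 - j] => //; rewrite inE; apply/orP; right.
by apply/mapP; exists j => //; rewrite mem_iota; lia.
Qed.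

Lemma octal_movesP s t :
  reflect (exists i o, [/\ i < size s, o \in heap_options (nth 0 s i) &
                          t = take i s ++ o ++ drop i.+1 s])
          (t \in octal_moves s).
Proof.
apply: (iffP allpairsPdep) => -[i [o [lt_i opt_o ->]]];
  by exists i, o; move: lt_i; rewrite mem_iota.
Qed.

Lemma sumn_octal_move s t : t \in octal_moves s -> (sumn t).+1 = sumn s.
Proof.
case/octal_movesP => i [o [lt_i /heap_options_sumn sum_o ->]].
rewrite -[in RHS](cat_take_drop i s) (drop_nth 0 lt_i) !sumn_cat /= -sum_o; lia.
Qed.

Lemma octal_sg_fuelE k s : octal_sg_fuel k s = sg_fuel octal_moves k s.
Proof. by elim: k s => //= k IH s; congr mex; apply: eq_map. Qed.

Lemma octal_sgE s : octal_sg s = mex [seq octal_sg t | t <- octal_moves s].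
Proof.
rewrite /octal_sg octal_sg_fuelE (sg_fuel_rank (rank := sumn)); last first.
  by move=> x y /sumn_octal_move <-.
by congr mex; apply: eq_map => t /=; rewrite octal_sg_fuelE.
Qed.

Lemma large_heaps_cat s1 s2 : large_heaps (s1 ++ s2) = large_heaps s1 ++ large_heaps s2.
Proof. exact: filter_cat. Qed.

Lemma large_heaps_nth s i : i < size s -> 1 < nth 0 s i ->
  large_heaps s = large_heaps (take i s) ++ nth 0 s i :: large_heaps (drop i.+1 s).
Proof.
move=> lt_i gt1_i; rewrite -[in LHS](cat_take_drop i s) (drop_nth 0 lt_i).
by rewrite large_heaps_cat /large_heaps /= gt1_i.
Qed.

Lemma perm_cat_mid (T : eqType) (x : T) (A B C D F : seq T) :
  perm_eq (A ++ x :: B) (C ++ x :: D) -> perm_eq (A ++ F ++ B) (C ++ F ++ D).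
Proof.
rewrite -[x :: B]cat1s -[x :: D]cat1s perm_catCA perm_sym perm_catCA perm_cat2l.
by move=> perm_AB; rewrite perm_catCA perm_sym perm_catCA perm_cat2l.
Qed.

Fixpoint run_lengths (k : nat) (b : seq bool) : seq nat :=
  match b with
  | [::] => [:: k]
  | true :: b' => run_lengths k.+1 b'
  | false :: b' => k :: run_lengths 0 b'
  end.

Definition runs (b : seq bool) : seq nat := large_heaps (run_lengths 0 b).

Lemma run_lengths_nseq k m b : run_lengths k (nseq m true ++ b) = run_lengths (k + m) b.
Proof. by elim: m k => [|m IH] k /=; rewrite ?addn0 // IH addSnnS. Qed.

Lemma run_lengths_catF k b1 b2 :
  run_lengths k (b1 ++ false :: b2) = run_lengths k b1 ++ run_lengths 0 b2.
Proof. by elim: b1 k => [|[] b1 IH] k //=; rewrite IH. Qed.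

Lemma runs_catF b1 b2 : runs (b1 ++ false :: b2) = runs b1 ++ runs b2.
Proof. by rewrite /runs run_lengths_catF large_heaps_cat. Qed.

Lemma runs_catL b1 b2 : ~~ last false b1 -> runs (b1 ++ b2) = runs b1 ++ runs b2.
Proof.
case/lastP: b1 => [|b1 c] //; rewrite last_rcons => /negbTE ->.
by rewrite cat_rcons runs_catF -cats1 runs_catF cats0.
Qed.

Lemma runs_catR b1 b2 : ~~ head false b2 -> runs (b1 ++ b2) = runs b1 ++ runs b2.
Proof. by case: b2 => [|c b2] /=; [rewrite !cats0 | move/negbTE->; rewrite runs_catF]. Qed.

Lemma runs_nseq m : runs (nseq m true) = large_heaps [:: m].
Proof. by rewrite /runs -[nseq m true]cats0 run_lengths_nseq. Qed.

(* Removal of isolated vertices on a bit sequence; [prev] is the bit just before [b]. *)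
Fixpoint prune (prev : bool) (b : seq bool) : seq bool :=
  match b with
  | [::] => [::]
  | c :: b' => (c && (prev || head false b')) :: prune c b'
  end.

Lemma size_prune prev b : size (prune prev b) = size b.
Proof. by elim: b prev => //= c b IH prev; rewrite IH. Qed.

Lemma nth_prune prev b i : nth false (prune prev b) i =
  nth false b i && ((if i is i'.+1 then nth false b i' else prev) || nth false b i.+1).
Proof. by elim: b prev i => [|c b IH] prev [|i] //=; rewrite IH; case: i. Qed.

Lemma prune_catF prev b1 b2 :
  prune prev (b1 ++ false :: b2) = prune prev b1 ++ false :: prune false b2.
Proof. by elim: b1 prev => [|c b1 IH] prev //=; rewrite IH; case: b1 {IH}. Qed.

Lemma prune_catL b1 b2 :
  ~~ last false b1 -> prune false (b1 ++ b2) = prune false b1 ++ prune false b2.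
Proof.
case/lastP: b1 => [|b1 c] //; rewrite last_rcons => /negbTE ->.
by rewrite cat_rcons prune_catF -cats1 prune_catF -catA.
Qed.

Lemma prune_catR prev b1 b2 :
  ~~ head false b2 -> prune prev (b1 ++ b2) = prune prev b1 ++ prune false b2.
Proof. by case: b2 => [|c b2] /=; [rewrite !cats0 | move/negbTE->; rewrite prune_catF]. Qed.

Lemma prune_true_nseq m : prune true (nseq m true) = nseq m true.
Proof. by elim: m => //= m ->. Qed.

Lemma runs_prune_nseq m : runs (prune false (nseq m true)) = large_heaps [:: m].
Proof. by case: m => [|[|m]] //=; rewrite prune_true_nseq; exact: (runs_nseq m.+2). Qed.

Lemma prefix_run b : exists h b', b = nseq h true ++ b' /\ ~~ head false b'.
Proof.
elim: b => [|[] b [h [b' [-> head_b']]]]; first by exists 0, [::].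
  by exists h.+1, b'.
by exists 0, (false :: nseq h true ++ b').
Qed.

Lemma run_through b v : nth false b v ->
  exists p h q j, [/\ b = p ++ nseq h true ++ q, ~~ last false p, ~~ head false q,
                      v = size p + j & j < h].
Proof.
elim: b v => [|c b IH] [|v] //=.
  move=> ->; have [h [q [-> head_q]]] := prefix_run b.
  by exists [::], h.+1, q, 0.
move=> /IH [p [h [q [j [-> last_p head_q -> lt_j]]]]].
case: c; case: p last_p => [|d p] last_p.
- by exists [::], h.+1, q, j.+1.
- by exists [:: true, d & p], h, q, j.
- by exists [:: false], h, q, j.
- by exists [:: false, d & p], h, q, j.
Qed.

Lemma mem_run_lengths b k m : m \in run_lengths k b ->
  (exists q, [/\ b = nseq (m - k) true ++ q, ~~ head false q & k <= m]) \/
  (exists p q, [/\ b = p ++ nseq m true ++ q, ~~ last true p & ~~ head false q]).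
Proof.
elim: b k => [|c b IH] k /=; first by rewrite inE => /eqP->; left; exists [::]; rewrite subnn.
case: c.
  move=> /IH [[q [-> head_q lt_k]]|[p [q [-> last_p head_q]]]].
    by left; exists q; split => //; [rewrite -(subnSK lt_k) | apply: ltnW].
  by right; exists (true :: p), q.
rewrite inE => /orP [/eqP->|]; first by left; exists (false :: b); rewrite subnn.
move=> /IH [[q [-> head_q _]]|[p [q [-> last_p head_q]]]].
  by right; exists [:: false], q; rewrite subn0.
by right; exists (false :: p), q; case: p last_p.
Qed.

Lemma mem_runs b m : m \in runs b ->
  exists p q, [/\ b = p ++ nseq m true ++ q, ~~ last false p & ~~ head false q].
Proof.
rewrite mem_filter => /andP [_ /mem_run_lengths].
case=> [[q [-> head_q _]]|[p [q [-> last_p head_q]]]].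
  by exists [::], q; rewrite subn0.
by exists p, q; case: p last_p.
Qed.

Lemma pruned_run p h q :
  ~~ last false p -> ~~ head false q ->
  prune false (p ++ nseq h true ++ q) = p ++ nseq h true ++ q ->
  [/\ prune false p = p, prune false q = q & h != 1].
Proof.
move=> last_p head_q; rewrite prune_catL // prune_catR // => /eqP.
rewrite eqseq_cat ?size_prune // => /andP [/eqP -> ].
rewrite eqseq_cat ?size_prune // => /andP [/eqP pruned_h /eqP ->].
by split => //; apply: contra_eqN pruned_h => /eqP ->.
Qed.

Lemma runs_run p h q : 1 < h -> ~~ last false p -> ~~ head false q ->
  runs (p ++ nseq h true ++ q) = runs p ++ h :: runs q.
Proof.
move=> gt1_h last_p head_q.
by rewrite runs_catL // runs_catR // runs_nseq /large_heaps /= gt1_h.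
Qed.

Lemma nseq_split_at (T : Type) (x : T) h j : j < h ->
  nseq h x = nseq j x ++ x :: nseq (h.-1 - j) x.
Proof.
move=> lt_j; have -> : h = j + (h.-1 - j).+1 by lia.
by rewrite nseqD; congr (_ ++ _ :: nseq _ _); lia.
Qed.

Lemma set_nth_cat_size (T : Type) (x0 x y : T) (p r : seq T) :
  set_nth x0 (p ++ x :: r) (size p) y = p ++ y :: r.
Proof. by elim: p => //= d p ->. Qed.

Lemma runs_delete_in_run p h q j :
  prune false p = p -> prune false q = q -> ~~ last false p -> ~~ head false q -> j < h ->
  runs (prune false (set_nth false (p ++ nseq h true ++ q) (size p + j) false)) =
  runs p ++ large_heaps [:: j; h.-1 - j] ++ runs q.
Proof.
move=> pruned_p pruned_q last_p head_q lt_j.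
have -> : size p + j = size (p ++ nseq j true) by rewrite size_cat size_nseq.
rewrite (nseq_split_at true lt_j) -!catA cat_cons catA set_nth_cat_size prune_catF.
rewrite prune_catL // prune_catR // pruned_p pruned_q runs_catF.
rewrite runs_catL // runs_catR // !runs_prune_nseq -!catA; congr (_ ++ _).
by rewrite catA -large_heaps_cat.
Qed.

Section PathPositions.
Variable n : nat.
Implicit Types (S : {set 'I_n}) (v : 'I_n).

(* Membership of a natural number, false outside [0, n): the neighbours [i - 1] and
   [i + 1] of a vertex can then be queried without bound checks. *)
Definition nat_mem S (i : nat) : bool := [exists j : 'I_n, (val j == i) && (j \in S)].

Definition bits S : seq bool := mkseq (nat_mem S) n.

Lemma size_bits S : size (bits S) = n.
Proof. exact: size_mkseq. Qed.

Lemma nat_memP S i : reflect (exists2 j : 'I_n, val j = i & j \in S) (nat_mem S i).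
Proof.
apply: (iffP existsP) => [[j /andP [/eqP <- Sj]]|[j <- Sj]]; exists j => //.
by rewrite eqxx.
Qed.

Lemma nat_mem_val S v : nat_mem S v = (v \in S).
Proof.
by apply/nat_memP/idP => [[j /val_inj -> //]|Sv]; exists v.
Qed.

Lemma nth_bits S i : nth false (bits S) i = nat_mem S i.
Proof.
have [lt_i|ge_i] := ltnP i n; first by rewrite nth_mkseq.
rewrite nth_default ?size_bits //; apply/esym/nat_memP => -[j ji _].
by move: (ltn_ord j); rewrite ji ltnNge ge_i.
Qed.

Lemma bits_setT : bits [set: 'I_n] = nseq n true.
Proof.
apply: (@eq_from_nth _ false); first by rewrite size_bits size_nseq.
move=> i; rewrite size_bits => lt_i; rewrite nth_bits nth_nseq lt_i.
by apply/nat_memP; exists (Ordinal lt_i); rewrite ?inE.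
Qed.

Lemma nat_mem_grim_clean S i :
  nat_mem (grim_clean (path_rel n) S) i =
  nat_mem S i && ((if i is i'.+1 then nat_mem S i' else false) || nat_mem S i.+1).
Proof.
apply/nat_memP/idP => [[j <-]|].
  rewrite inE => /andP [Sj /existsP [u /andP [Su]]].
  rewrite nat_mem_val Sj /path_rel => /orP [] /eqP ju.
    by apply/orP; right; apply/nat_memP; exists u.
  have -> : val j = u.+1 by exact: esym ju.
  by apply/orP; left; apply/nat_memP; exists u.
case/andP => /nat_memP [j ji Sj] adj; exists j => //; rewrite inE Sj /=.
case/orP: adj => [|/nat_memP [u ui Su]]; last first.
  by apply/existsP; exists u; rewrite Su /path_rel ji ui eqxx.
case: i ji => [|i] ji // /nat_memP [u ui Su].
by apply/existsP; exists u; rewrite Su /path_rel ji ui eqxx orbT.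
Qed.

Lemma bits_grim_clean S : bits (grim_clean (path_rel n) S) = prune false (bits S).
Proof.
apply: (@eq_from_nth _ false); first by rewrite size_prune !size_bits.
move=> i _; rewrite nth_prune !nth_bits nat_mem_grim_clean.
by case: i => [|i]; rewrite ?nth_bits.
Qed.

Lemma bits_setD1 S v : bits (S :\ v) = set_nth false (bits S) v false.
Proof.
apply: (@eq_from_nth _ false).
  by rewrite size_set_nth !size_bits; apply/esym/maxn_idPr; exact: ltn_ord.
move=> i _; rewrite nth_set_nth /= !nth_bits.
have [->|ne_iv] := eqVneq i v; first by rewrite nat_mem_val !inE eqxx.
apply/nat_memP/nat_memP => [[j ji]|[j ji Sj]].
  by rewrite !inE => /andP [_ Sj]; exists j.
exists j => //; rewrite !inE Sj andbT; apply: contra_neq ne_iv => jv.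
by rewrite -ji jv.
Qed.

Lemma bits_grim_move S v :
  bits (grim_move (path_rel n) S v) = prune false (set_nth false (bits S) v false).
Proof. by rewrite /grim_move bits_grim_clean bits_setD1. Qed.

Lemma grim_clean_idem S :
  grim_clean (path_rel n) (grim_clean (path_rel n) S) = grim_clean (path_rel n) S.
Proof.
apply/setP => w; rewrite !inE.
apply/andP/andP => [[/andP [Sw adj_w] _]|[Sw adj_w]]; first by [].
split; first by rewrite Sw.
case/existsP: (adj_w) => u /andP [Su wu]; apply/existsP; exists u.
rewrite wu andbT inE Su /=; apply/existsP; exists w.
by rewrite Sw /path_rel orbC.
Qed.

End PathPositions.

Section PathSimulation.
Variable n : nat.
Implicit Types (S : {set 'I_n}) (v : 'I_n) (s : seq nat).

Definition represents S s : Prop :=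
  grim_clean (path_rel n) S = S /\ perm_eq (large_heaps s) (runs (bits S)).

Lemma represents_move S s p h q j v :
  represents S s -> bits S = p ++ nseq h true ++ q ->
  ~~ last false p -> ~~ head false q -> j < h -> val v = size p + j ->
  [/\ 1 < h, v \in S, h \in large_heaps s &
      forall i o, i < size s -> nth 0 s i = h ->
        large_heaps o = large_heaps [:: j; h.-1 - j] ->
        represents (grim_move (path_rel n) S v) (take i s ++ o ++ drop i.+1 s)].
Proof.
move=> [clean_S perm_s] bits_S last_p head_q lt_j val_v.
have := bits_grim_clean S; rewrite clean_S bits_S => /esym pruned.
have [pruned_p pruned_q ne_h1] := pruned_run last_p head_q pruned.
have gt1_h : 1 < h by lia.
have runs_S : runs (bits S) = runs p ++ h :: runs q by rewrite bits_S runs_run.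
split => //.
- rewrite -nat_mem_val -nth_bits bits_S val_v nth_cat ltnNge leq_addr addKn /=.
  by rewrite nth_cat size_nseq lt_j nth_nseq lt_j.
- by rewrite (perm_mem perm_s) runs_S mem_cat inE eqxx orbT.
- move=> i o lt_i s_i large_o; split; first by rewrite /grim_move grim_clean_idem.
  rewrite bits_grim_move bits_S val_v runs_delete_in_run // !large_heaps_cat large_o.
  apply: (perm_cat_mid (x := h)); rewrite -runs_S -{1}s_i -large_heaps_nth //.
  by rewrite s_i.
Qed.

Lemma represents_grim_move S s v : represents S s -> v \in S ->
  exists2 t, t \in octal_moves s & represents (grim_move (path_rel n) S v) t.
Proof.
move=> rep Sv; have : nth false (bits S) v by rewrite nth_bits nat_mem_val.
case/run_through => p [h [q [j [bits_S last_p head_q val_v lt_j]]]].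
have [gt1_h _ large_h rep_move] := represents_move rep bits_S last_p head_q lt_j val_v.
have [o opt_o large_o] := heap_options_split gt1_h lt_j.
have s_h : h \in s by move: large_h; rewrite mem_filter => /andP [].
exists (take (index h s) s ++ o ++ drop (index h s).+1 s).
  by apply/octal_movesP; exists (index h s), o; rewrite nth_index ?index_mem.
by apply: rep_move; rewrite ?nth_index ?index_mem.
Qed.

Lemma represents_octal_move S s t : represents S s -> t \in octal_moves s ->
  exists2 v, v \in S & represents (grim_move (path_rel n) S v) t.
Proof.
move=> rep /octal_movesP [i [o [lt_i opt_o ->]]].
have [gt1_h [j lt_j large_o]] := large_heap_options opt_o.
have : nth 0 s i \in runs (bits S) by rewrite -(perm_mem rep.2) mem_filter gt1_h mem_nth.
case/mem_runs => p [q [bits_S last_p head_q]].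
have lt_v : size p + j < n by rewrite -(size_bits S) bits_S !size_cat size_nseq; lia.
have [_ Sv _ rep_move] :=
  represents_move (v := Ordinal lt_v) rep bits_S last_p head_q lt_j erefl.
by exists (Ordinal lt_v) => //; apply: rep_move.
Qed.

Lemma grim_sg_represents S s : represents S s -> grim_sg (path_rel n) S = octal_sg s.
Proof.
have [k] := ubnP #|S|; elim: k S s => // k IH S s /ltnSE le_S rep.
rewrite grim_sgE octal_sgE; apply: eq_mex => x; apply/mapP/mapP.
- case=> v; rewrite mem_enum => Sv ->.
  have [t move_t rep_t] := represents_grim_move rep Sv.
  by exists t => //; apply: IH rep_t; apply: leq_trans (card_grim_move _ Sv) le_S.
- case=> t move_t ->; have [v Sv rep_v] := represents_octal_move rep move_t.
  exists v; first by rewrite mem_enum.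
  by apply: esym; apply: IH rep_v; apply: leq_trans (card_grim_move _ Sv) le_S.
Qed.

End PathSimulation.

Theorem theorem5p4 (n : nat) :
  grim_graph_sg (path_rel n) = octal_sg [:: n].
Proof.
apply: grim_sg_represents; split; first exact: grim_clean_idem.
by rewrite bits_grim_clean bits_setT runs_prune_nseq.
Qed.
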